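(* Let $f:\mathbb{R}^n\to(-\infty,+\infty]$ be a proper closed function, let $\mathcal{M}$ be a $C^1$-smooth embedded submanifold of $\mathbb{R}^n$ containing $\bar x$ with the induced metric, and suppose $f$ is $C^1$-partly smooth and prox-regular around $\bar x$ relative to $\mathcal{M}$, with $g_{\mathcal{U}}(\bar x)\in\operatorname{ri}\partial f(\bar x)$. Then for all $x\in\mathcal{M}$ near $\bar x$, $\nabla_{\mathcal{M}}f(x)=g_{\mathcal{U}}(x)$.
   Context: $\hat\partial f$ is the Fréchet and $\partial f$ the limiting subdifferential. Partial smoothness: $f$ is partly smooth at a point $x\in\mathcal M$ relative to a $C^p$ manifold $\mathcal{M}$ (for all subgradients) if: (Regularity) $\hat\partial f(z)=\partial f(z)\neq\varnothing$ for all $z\in\mathcal{M}$ near $x$; (Restricted smoothness) $f|_{\mathcal{M}}$ is $C^p$-smooth around $x$; (Sharpness) $\operatorname{par}\partial f(x)$ equals $N_x\mathcal{M}$; (Inner semicontinuity) for every $y\in\partial f(x)$ and every sequence $x_r\to x$ in $\mathcal{M}$ there exist $y_r\in\partial f(x_r)$ with $y_r\to y$. ''Around $\bar x$ relative to $\mathcal M$'' means at every point of $\mathcal M$ near $\bar x$ (with $p=1$). $f$ is prox-regular at $x$ for $\bar v\in\hat\partial f(x)$ if there are $\epsilon>0,\rho\ge0$ with $f(x'')\ge f(x')+\langle v,x''-x'\rangle-\frac\rho2\|x''-x'\|^2$ for all $x',x''\in B_\epsilon(x)$ and $v\in\hat\partial f(x')$ with $\|v-\bar v\|<\epsilon$,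 $f(x')<f(x)+\epsilon$; ''prox-regular around $\bar x$ relative to $\mathcal M$'' is taken to mean prox-regular at every point of $\mathcal M$ near $\bar x$ for each of its subgradients. For $g\in\partial f(x)$: $\mathcal{V}(x)=\operatorname{lin}(\partial f(x)-g)$, $\mathcal{U}(x)=\mathcal{V}(x)^\perp$, $g_{\mathcal U}(x)=P_{\mathcal U(x)}(g)$ (independent of $g$). $\nabla_{\mathcal M}f(x)$ is the Riemannian gradient of $f|_{\mathcal M}$. *)

(* R^n is represented as 'rV[R]_n
   (R : realType), with its standard (product) topology, and the Euclidean
   inner product / norm defined explicitly below. *)
From HB Require Import structures.
From mathcomp Require Import all_boot all_order all_algebra.
From mathcomp Require Import all_classical all_reals all_analysis.
Set Implicit Arguments. Unset Strict Implicit. Unset Printing Implicit Defensive.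
Import Order.TTheory GRing.Theory Num.Theory numFieldNormedType.Exports.
Local Open Scope classical_set_scope.
Local Open Scope ring_scope.

Section Defs.
Context {R : realType} {n : nat}.
Local Notation vec := 'rV[R]_n.

Definition dotv (u v : vec) : R := \sum_(i < n) u ord0 i * v ord0 i.
Definition enorm (u : vec) : R := Num.sqrt (dotv u u).

Definition lin_span (S : set vec) : set vec :=
  [set v | exists m (c : 'I_m -> R) (s : 'I_m -> vec),
     (forall i, S (s i)) /\ v = \sum_(i < m) c i *: s i].
Definition aff_hull (S : set vec) : set vec :=
  [set v | exists m (c : 'I_m -> R) (s : 'I_m -> vec),
     (forall i, S (s i)) /\ \sum_(i < m) c i = 1 /\ v = \sum_(i < m) c i *: s i].
Definition ri (S : set vec) : set vec :=
  [set y | S y /\ exists eps : R, 0 < eps /\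
     forall z, aff_hull S z -> enorm (z - y) < eps -> S z].
Definition par (S : set vec) : set vec :=
  lin_span [set d | exists a b, S a /\ S b /\ d = a - b].
Definition orth (S : set vec) : set vec :=
  [set w | forall v, S v -> dotv w v = 0].

Definition proper_fun (f : vec -> \bar R) : Prop :=
  (forall x, f x != -oo%E) /\ exists x, f x \is a fin_num.
Definition closed_fun (f : vec -> \bar R) : Prop :=
  forall x (a : \bar R), (a < f x)%E -> \forall y \near x, (a < f y)%E.

Definition frechet_subdiff (f : vec -> \bar R) (x v : vec) : Prop :=
  f x \is a fin_num /\
  forall eps : R, 0 < eps -> \forall y \near x,
    (f x + (dotv v (y - x) - eps * enorm (y - x))%:E <= f y)%E.

Definition lim_subdiff (f : vec -> \bar R) (x v : vec) : Prop :=
  f x \is a fin_num /\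
  exists (xk vk : nat -> vec),
    xk @ \oo --> x /\ (fun k => f (xk k)) @ \oo --> f x /\
    (forall k, frechet_subdiff f (xk k) (vk k)) /\ vk @ \oo --> v.

(** Prox-regularity of f at x for vb (vb is assumed to lie in \hat\partial f(x)). *)
Definition prox_regular (f : vec -> \bar R) (x vb : vec) : Prop :=
  exists eps rho : R, 0 < eps /\ 0 <= rho /\
  forall x' x'' v, enorm (x' - x) < eps -> enorm (x'' - x) < eps ->
    frechet_subdiff f x' v -> enorm (v - vb) < eps -> (f x' < f x + eps%:E)%E ->
    (f x' + (dotv v (x'' - x') - rho / 2 * dotv (x'' - x') (x'' - x'))%:E
       <= f x'')%E.

Definition C1_on {V : normedModType R} (U : set vec) (F : vec -> V) : Prop :=
  (forall y, U y -> differentiable F y) /\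
  (forall (v : vec) y, U y -> {for y, continuous (fun z => 'D_v F z)}).

Definition is_chart (M : set vec) (z : vec) (k : nat) (U : set vec)
    (F : vec -> 'rV[R]_k) : Prop :=
  open U /\ U z /\ C1_on U F /\
  (forall w : 'rV[R]_k, exists v, 'D_v F z = w) /\
  (forall y, U y -> (M y <-> F y = 0)).

Definition C1_submanifold (M : set vec) : Prop :=
  forall z, M z -> exists k (U : set vec) (F : vec -> 'rV[R]_k), @is_chart M z k U F.

Definition tangent (M : set vec) (z : vec) : set vec :=
  [set v | exists k (U : set vec) (F : vec -> 'rV[R]_k),
     @is_chart M z k U F /\ 'D_v F z = 0].
Definition normal (M : set vec) (z : vec) : set vec := orth (tangent M z).

Definition restricted_C1 (f : vec -> \bar R) (M : set vec) (x : vec) : Prop :=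
  exists (U : set vec) (ft : vec -> R), open U /\ U x /\ C1_on U ft /\
    forall y, U y -> M y -> f y = (ft y)%:E.

(** v is the Riemannian gradient of f|_M at x (induced metric): v is the
    tangent vector representing the differential of f|_M at x, i.e. the
    projection onto T_x M of the gradient of any local C^1 extension. *)
Definition riem_grad (f : vec -> \bar R) (M : set vec) (x v : vec) : Prop :=
  tangent M x v /\
  exists (U : set vec) (ft : vec -> R), open U /\ U x /\ C1_on U ft /\
    (forall y, U y -> M y -> f y = (ft y)%:E) /\
    forall w, tangent M x w -> dotv v w = 'D_w ft x.

(** V(x) = lin(\partial f(x) - g), U(x) = V(x)^\perp, g_U(x) = P_{U(x)} g. *)
Definition Vspace (f : vec -> \bar R) (x g : vec) : set vec :=
  lin_span [set d | exists y, lim_subdiff f x y /\ d = y - g].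
Definition Uspace (f : vec -> \bar R) (x g : vec) : set vec := orth (Vspace f x g).
Definition gU (f : vec -> \bar R) (x u : vec) : Prop :=
  exists g, lim_subdiff f x g /\ Uspace f x g u /\
    forall w, Uspace f x g w -> dotv (g - u) w = 0.

Definition near_M (M : set vec) (xbar : vec) (P : vec -> Prop) : Prop :=
  exists delta : R, 0 < delta /\
    forall z, M z -> enorm (z - xbar) < delta -> P z.

Definition partly_smooth (f : vec -> \bar R) (M : set vec) (x : vec) : Prop :=
  M x /\
  near_M M x (fun z => (forall v, frechet_subdiff f z v <-> lim_subdiff f z v) /\
                        exists v, lim_subdiff f z v) /\
  restricted_C1 f M x /\
  par (lim_subdiff f x) = normal M x /\
  (forall y, lim_subdiff f x y -> forall xr : nat -> vec,
     (forall r, M (xr r)) -> xr @ \oo --> x ->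
     exists yr : nat -> vec, (forall r, lim_subdiff f (xr r) (yr r)) /\ yr @ \oo --> y).

End Defs.

(* Sharpness identifies V(x) = lin(∂f(x) - g) with the normal space N_x M, so
   U(x) is the tangent space T_x M, the kernel of the derivative of any local
   defining map F of M, and g_U(x) is the orthogonal projection of a
   subgradient g onto T_x M.  By regularity g is a Fréchet subgradient.  By
   the Lyusternik-Graves theorem applied to F, M contains points x + t w + o(t)
   for every tangent direction w, so the Fréchet inequality and the smoothness
   of f on M give <g, w> <= D_w f(x), and likewise for -w.  Hence <g, w> equals
   D_w f(x) on T_x M, i.e. the projection of g onto T_x M is the Riemannian
   gradient. *)

From HB Require Import structures.
From mathcomp Require Import all_boot all_order all_algebra.
From mathcomp Require Import all_classical all_reals all_analysis.
From mathcomp Require Import ring lra.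
Set Implicit Arguments. Unset Strict Implicit. Unset Printing Implicit Defensive.
Import Order.TTheory GRing.Theory Num.Theory numFieldNormedType.Exports.
Local Open Scope classical_set_scope.
Local Open Scope ring_scope.

(* Re-declaring row vectors as a normed module lets HB find their complete
   normed module structure, which [banach_fixed_point] needs. *)
HB.instance Definition _ (R : realType) (k : nat) := NormedModule.on 'rV[R]_k.

Section MatrixNorm.
Context {R : realType}.

Lemma normr_entry_le m p (A : 'M[R]_(m, p)) i j : `|A i j| <= `|A|.
Proof.
rewrite [leRHS]/Num.Def.normr /= mx_normrE.
exact: (le_bigmax _ (fun ij => `|A ij.1 ij.2|) (i, j)).
Qed.

Lemma mx_norm_le m p (A : 'M[R]_(m, p)) c : 0 <= c ->
  (forall i j, `|A i j| <= c) -> `|A| <= c.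
Proof.
move=> c0 Ac; rewrite [leLHS]/Num.Def.normr /= mx_normrE.
by apply: bigmax_le => // -[i j] _; exact: Ac.
Qed.

Lemma mulmx_bounded m p (B : 'M[R]_(m, p)) :
  exists2 c, 0 < c & forall s : 'rV[R]_m, `|s *m B| <= c * `|s|.
Proof.
have c0 : 0 < \sum_i \sum_j `|B i j| + 1.
  by rewrite ltr_wpDl // sumr_ge0 // => i _; rewrite sumr_ge0.
exists (\sum_i \sum_j `|B i j| + 1) => // s.
apply: mx_norm_le => [|i0 j]; first by rewrite mulr_ge0 // ltW.
rewrite (ord1 i0) mxE; apply: (le_trans (ler_norm_sum _ _ _)).
rewrite mulrDl mul1r mulr_suml -[X in X <= _]addr0 lerD //; apply: ler_sum => l _.
rewrite normrM mulrC ler_pM ?normr_entry_le //.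
by rewrite (bigD1 j) //= lerDl sumr_ge0.

Qed.

Lemma enorm_le_mx_norm n (u : 'rV[R]_n) : enorm u <= n%:R * `|u|.
Proof.
rewrite -[leRHS]ger0_norm ?mulr_ge0 // -sqrtr_sqr ler_sqrt ?sqr_ge0 //.
apply: (@le_trans _ _ (\sum_(i < n) `|u| ^+ 2)).
  apply: ler_sum => i _; rewrite -expr2 -real_normK ?num_real //.
  by rewrite lerXn2r ?nnegrE // normr_entry_le.
rewrite sumr_const card_ord exprMn -[_ *+ n]mulr_natl ler_wpM2r ?sqr_ge0 //.
by rewrite -natrX ler_nat; case: (n) => // m; rewrite expnS leq_pmulr // expn_gt0.
Qed.

End MatrixNorm.

Section Euclidean.
Context {R : realType} {n : nat}.
Local Notation vec := 'rV[R]_n.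
Implicit Types (u v w : vec) (S K : set vec).

Lemma dotvC u v : dotv u v = dotv v u.
Proof. by apply: eq_bigr => i _; rewrite mulrC. Qed.

Lemma dotvDl u u' v : dotv (u + u') v = dotv u v + dotv u' v.
Proof. by rewrite /dotv -big_split; apply: eq_bigr => i _; rewrite mxE mulrDl. Qed.

Lemma dotvZl a u v : dotv (a *: u) v = a * dotv u v.
Proof. by rewrite /dotv mulr_sumr; apply: eq_bigr => i _; rewrite mxE mulrA. Qed.

Lemma dotvNl u v : dotv (- u) v = - dotv u v.
Proof. by rewrite -scaleN1r dotvZl mulN1r. Qed.

Lemma dotvBl u u' v : dotv (u - u') v = dotv u v - dotv u' v.
Proof. by rewrite dotvDl dotvNl. Qed.

Lemma dotvDr u v v' : dotv u (v + v') = dotv u v + dotv u v'.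
Proof. by rewrite !(dotvC u) dotvDl. Qed.

Lemma dotvBr u v v' : dotv u (v - v') = dotv u v - dotv u v'.
Proof. by rewrite !(dotvC u) dotvBl. Qed.

Lemma dotvZr a u v : dotv u (a *: v) = a * dotv u v.
Proof. by rewrite !(dotvC u) dotvZl. Qed.

Lemma dotv_sumr u m (h : 'I_m -> vec) :
  dotv u (\sum_(i < m) h i) = \sum_(i < m) dotv u (h i).
Proof.
apply: (big_morph (dotv u)) => [v v'|]; first by rewrite !(dotvC u) dotvDl.
by rewrite /dotv big1 // => i _; rewrite mxE mulr0.
Qed.

Lemma dotv_trmx_kernel k (s : 'rV[R]_k) (J : 'M[R]_(n, k)) v :
  v *m J = 0 -> dotv (s *m J^T) v = 0.
Proof.
move=> vJ; have -> : dotv (s *m J^T) v = (s *m (v *m J)^T) 0 0.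
  by rewrite trmx_mul mulmxA [RHS]mxE; apply: eq_bigr => i _; rewrite [v^T _ _]mxE.
by rewrite vJ trmx0 mulmx0 mxE.
Qed.

Lemma dotv_eq0 u : (dotv u u == 0) = (u == 0).
Proof.
apply/idP/eqP => [|->]; last by rewrite /dotv big1 // => i _; rewrite mxE mul0r.
rewrite psumr_eq0 => [/allP u0|i _]; last by rewrite -expr2 sqr_ge0.
apply/rowP => i; rewrite mxE.
by have := u0 i (mem_index_enum i); rewrite /= mulf_eq0 orbb => /eqP.
Qed.

Lemma normr_dotv_le u v : `|dotv u v| <= (\sum_i `|u 0 i|) * `|v|.
Proof.
rewrite mulr_suml; apply: (le_trans (ler_norm_sum _ _ _)); apply: ler_sum => i _.
by rewrite normrM ler_wpM2l ?normr_entry_le.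
Qed.

Lemma orth_lin_span S : orth (lin_span S) = orth S.
Proof.
apply/seteqP; split => w wS v.
  move=> Sv; apply: wS; exists 1%N, (fun=> 1), (fun=> v).
  by rewrite big_ord1 scale1r.
move=> [m [c [s [Ss ->]]]]; rewrite dotv_sumr big1 // => i _.
by rewrite dotvZr wS ?mulr0.
Qed.

Lemma orth_differences S g : S g ->
  orth [set d | exists y, S y /\ d = y - g] =
  orth [set d | exists a b, S a /\ S b /\ d = a - b].
Proof.
move=> Sg; apply/seteqP; split => w wS d.
  move=> [a [b [Sa [Sb ->]]]].
  have -> : a - b = (a - g) - (b - g) by rewrite opprB addrA subrK.
  by rewrite dotvBr !wS ?subrr //; [exists b | exists a].
by move=> [y [Sy ->]]; apply: wS; exists y, g.
Qed.

Lemma orth_orth K : (forall w, exists2 p, K p & orth K (w - p)) ->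
  orth (orth K) = K.
Proof.
move=> proj; apply/seteqP; split => w; last first.
  by move=> Kw v /(_ w Kw); rewrite dotvC.
move=> wKK; have [p Kp wpK] := proj w.
have /eqP : dotv (w - p) (w - p) = 0.
  by rewrite dotvBl wKK // dotvC wpK // subrr.
by rewrite dotv_eq0 subr_eq0 => /eqP ->.
Qed.

Lemma kermx_orth_proj k (J : 'M[R]_(n, k)) : row_full J ->
  forall w, exists2 p, p *m J = 0 & orth [set v | v *m J = 0] (w - p).
Proof.
move=> /row_fullP [B BJ] w; pose G := J^T *m J.
have G_unit : G \in unitmx.
  rewrite -row_free_unit; apply: inj_row_free => s sG.
  have /eqP : dotv (s *m J^T) (s *m J^T) = 0.
    by apply: dotv_trmx_kernel; rewrite -mulmxA.
  rewrite dotv_eq0 => /eqP sJ.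
  by rewrite -[s]mulmx1 -trmx1 -BJ trmx_mul mulmxA sJ mul0mx.
exists (w - w *m J *m invmx G *m J^T).
  by rewrite mulmxBl -!mulmxA mulVmx // mulmx1 subrr.
by move=> v vJ; rewrite opprB addrC subrK; apply: dotv_trmx_kernel.
Qed.

End Euclidean.

Section Differential.
Context {R : realType} {n : nat}.
Local Notation vec := 'rV[R]_n.

Lemma differential_bounded {W : normedModType R} (phi : vec -> W) x :
  differentiable phi x -> exists2 C, 0 < C & forall v, `|'d phi x v| <= C * `|v|.
Proof.
move=> dphi.
have : bounded_near ('d phi x) (nbhs (0 : vec)).
  by apply: continuous_linear_bounded; exact: diff_continuous.
by move=> /linear_boundedP /pinfty_ex_gt0.
Qed.

Lemma differentiable_approx {W : normedModType R} (phi : vec -> W) x :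
  differentiable phi x -> forall eps, 0 < eps ->
  \forall y \near x, `|phi y - phi x - 'd phi x (y - x)| <= eps * `|y - x|.
Proof.
move=> dphi eps eps0.
have /eqaddoP /(_ eps eps0) /nbhs_normP [r r0 near0] := diff_locally dphi.
apply/nbhs_normP; exists r => // y /= xy.
have := near0 (y - x); rewrite /= sub0r normrN distrC => /(_ xy).
by rewrite !fctE /= subrK opprD addrA.
Qed.

Lemma derive_row_sum {W : normedModType R} (phi : vec -> W) x w :
  differentiable phi x -> 'D_w phi x = \sum_i w 0 i *: 'D_('e_i) phi x.
Proof.
move=> dphi; rewrite deriveE // {1}(row_sum_delta w) linear_sum.
by apply: eq_bigr => i _; rewrite linearZ deriveE.
Qed.

Lemma derive_dotv (phi : vec -> R) x w : differentiable phi x ->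
  'D_w phi x = dotv (\row_i 'D_('e_i) phi x) w.
Proof.
move=> dphi; rewrite derive_row_sum //; apply: eq_bigr => i _.
by rewrite mxE mulrC.
Qed.

Lemma is_derive_line_entry k (F : vec -> 'rV[R]_k) (d q : vec) i t :
  differentiable F (t *: d + q) ->
  is_derive t 1 (fun s => F (s *: d + q) 0 i) ('D_d F (t *: d + q) 0 i).
Proof.
set z := t *: d + q => dF.
have dFd : derivable F z d by exact: diff_derivable.
have dFi : derivable (fun y => F y 0 i) z d by move/derivable_mxP: dFd.
have -> : 'D_d F z 0 i = 'D_d (fun y => F y 0 i) z by rewrite derive_mx ?mxE.
have quotE : (fun h : R => h^-1 *: (F ((h *: 1 + t) *: d + q) 0 i - F z 0 i)) =
             (fun h : R => h^-1 *: (F (h *: d + z) 0 i - F z 0 i)).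
  by apply: funext => h; rewrite /z [h *: 1]mulr1 scalerDl addrA.
apply: DeriveDef; first by rewrite /derivable /= quotE.
by rewrite /derive /= quotE.
Qed.

Lemma mvt_segment_entry k (F : vec -> 'rV[R]_k) (p q : vec) i :
  (forall s, 0 <= s <= 1 -> differentiable F (s *: (p - q) + q)) ->
  exists2 c, 0 <= c <= 1 & F p 0 i - F q 0 i = 'D_(p - q) F (c *: (p - q) + q) 0 i.
Proof.
move=> dF; pose G s := F (s *: (p - q) + q) 0 i.
have derG (s : R) : s \in `]0, 1[ -> is_derive s 1 G ('D_(p - q) F (s *: (p - q) + q) 0 i).
  rewrite in_itv /= => /andP[s0 s1].
  by apply: is_derive_line_entry; apply: dF; rewrite !ltW.
have contG : {within `[0, 1], continuous G}.
  apply: continuous_subspace_itv => s; rewrite in_itv /= => /dF dFs.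
  apply: differentiable_continuous; apply/derivable1_diffP.
  by have [] := is_derive_line_entry i dFs.
have [c] := MVT_segment ler01 derG contG.
rewrite in_itv /= /G subr0 mulr1 scale1r scale0r add0r subrK => c01 ->.
by exists c.
Qed.

Lemma ball_segment (x p q : vec) r s : `|p - x| < r -> `|q - x| < r ->
  0 <= s <= 1 -> `|s *: (p - q) + q - x| < r.
Proof.
move=> px qx /andP[s0 s1].
have -> : s *: (p - q) + q - x = s *: (p - x) + (1 - s) *: (q - x).
  by apply/rowP => j; rewrite !mxE; ring.
rewrite (le_lt_trans (ler_normD _ _)) // !normrZ !ger0_norm ?subr_ge0 //.
have : Num.max `|p - x| `|q - x| < r by rewrite gt_max px qx.
have : s * `|p - x| <= s * Num.max `|p - x| `|q - x|.
  by rewrite ler_wpM2l // le_max lexx.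
have : (1 - s) * `|q - x| <= (1 - s) * Num.max `|p - x| `|q - x|.
  by rewrite ler_wpM2l ?subr_ge0 // le_max lexx orbT.
lra.
Qed.

Lemma normr_deriveB_le k (F : vec -> 'rV[R]_k) y x d e :
  differentiable F y -> differentiable F x ->
  (forall l, `|'D_('e_l) F y - 'D_('e_l) F x| <= e) ->
  `|'D_d F y - 'D_d F x| <= n%:R * e * `|d|.
Proof.
move=> dFy dFx De.
rewrite (derive_row_sum _ dFy) (derive_row_sum _ dFx) -sumrB.
apply: (le_trans (ler_norm_sum _ _ _)).
apply: (@le_trans _ _ (\sum_(l < n) e * `|d|)).
  apply: ler_sum => l _; rewrite -scalerBr normrZ mulrC ler_pM ?De //.
  exact: normr_entry_le.
by rewrite sumr_const card_ord -[e * _ *+ n]mulr_natl mulrA.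
Qed.

Lemma C1_on_strict_diff k (U : set vec) (F : vec -> 'rV[R]_k) x :
  open U -> U x -> C1_on U F -> forall eta, 0 < eta ->
  exists2 r, 0 < r & (forall p, `|p - x| < r -> U p) /\
    forall p q, `|p - x| < r -> `|q - x| < r ->
      `|F p - F q - (p - q) *m 'J F x| <= eta * `|p - q|.
Proof.
move=> oU Ux [dF cF] eta eta0; pose e := eta / (n%:R + 1).
have e0 : 0 < e by rewrite divr_gt0 // ltr_wpDl.
have nearD : \forall y \near x, forall l : 'I_n, `|'D_('e_l) F x - 'D_('e_l) F y| < e.
  apply: (@filter_forall _ _ (fun l y => `|'D_('e_l) F x - 'D_('e_l) F y| < e) (nbhs x) _).
  by move=> l; have /cvgrPdist_lt := cF 'e_l x Ux; apply.
have /nbhs_normP [r r0 near_r] :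
    \forall y \near x, U y /\ forall l, `|'D_('e_l) F x - 'D_('e_l) F y| < e.
  exact: filterS2 (open_nbhs_nbhs (conj oU Ux)) nearD.
have {}near_r y : `|y - x| < r -> U y /\ forall l, `|'D_('e_l) F y - 'D_('e_l) F x| < e.
  by rewrite distrC => /near_r [Uy Dy]; split; last by move=> l; rewrite distrC.
exists r => //; split => [p /near_r[] //|p q px qx].
have dFseg s : 0 <= s <= 1 -> differentiable F (s *: (p - q) + q).
  by move=> /(ball_segment px qx) /near_r [/dF].
apply: mx_norm_le => [|i0 i]; first by rewrite mulr_ge0 // ltW.
have [c c01 mvt] := mvt_segment_entry i dFseg.
have [_ Dc] := near_r _ (ball_segment px qx c01).
have dFx := dF x Ux.
rewrite (ord1 i0) -deriveEjacobian // !mxE mvt.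
have := normr_entry_le ('D_(p - q) F (c *: (p - q) + q) - 'D_(p - q) F x) 0 i.
rewrite !mxE => /le_trans -> //.
apply: (le_trans (normr_deriveB_le _ (dFseg c c01) dFx (fun l => ltW (Dc l)))).
rewrite ler_wpM2r // /e mulrC -mulrA ger_pMr // ler_pdivrMl ?ltr_wpDl //.
by rewrite mulr1 lerDl.
Qed.

End Differential.

Section Graves.
Context {R : realType}.

Lemma fixed_point_closed_ball {V : completeNormedModType R} (Phi : V -> V) rho :
  0 <= rho -> `|Phi 0| <= rho / 2 ->
  (forall s s', `|s| <= rho -> `|s'| <= rho ->
     `|Phi s - Phi s'| <= 2^-1 * `|s - s'|) ->
  exists2 p, `|p| <= rho & Phi p = p.
Proof.
move=> rho0 Phi0 contr; pose S := closed_ball_ Num.norm (0 : V) rho.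
have SE s : S s = (`|s| <= rho) by rewrite /S /closed_ball_ /= sub0r normrN.
have PhiS : {homo Phi : s / S s >-> S s}.
  move=> s; rewrite !SE => srho.
  have := contr s 0 srho; rewrite normr0 subr0 => /(_ rho0) Ps.
  rewrite -[Phi s](subrK (Phi 0)) (le_trans (ler_normD _ _)) //; lra.
have ctr : is_contraction (mkfun_fun PhiS).
  exists (2^-1)%:nng; split; first by rewrite /= invf_lt1 ?ltr1n.
  by move=> [s s'] [/= Ss Ss']; apply: contr; rewrite -SE.
have clS : closed S by exact: closed_closed_ball_.
have S0 : S 0 by rewrite SE normr0.
have [p Sp pE] := banach_fixed_point ctr clS (ex_intro _ 0 S0).
by exists p; rewrite -?SE // {2}pE.
Qed.

Context {n : nat}.
Local Notation vec := 'rV[R]_n.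

(* s |-> s - F (z + s *m B) is a 1/2-contraction of the ball of radius
   2 |F z|; its fixed point p gives the zero z + p *m B. *)
Lemma graves_zero k (F : vec -> 'rV[R]_k) (J : 'M[R]_(n, k)) (B : 'M[R]_(k, n)) x r c :
  B *m J = 1%:M -> 0 < c -> (forall s : 'rV[R]_k, `|s *m B| <= c * `|s|) ->
  (forall p q, `|p - x| < r -> `|q - x| < r ->
     `|F p - F q - (p - q) *m J| <= (2 * c)^-1 * `|p - q|) ->
  forall z, `|z - x| + 2 * c * `|F z| < r ->
  exists y, [/\ F y = 0, `|y - x| < r & `|y - z| <= 2 * c * `|F z|].
Proof.
move=> BJ c0 cB SD z zr; pose P s := z + s *m B.
have PB s s' : P s - P s' = (s - s') *m B.
  by rewrite mulmxBl /P opprD addrACA subrr add0r.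
have PzB s : P s - z = s *m B by rewrite /P addrC addKr.
have Pnear s : `|s| <= 2 * `|F z| -> `|P s - x| < r.
  move=> sFz; apply: le_lt_trans zr.
  have -> : P s - x = (z - x) + s *m B by rewrite /P addrAC.
  rewrite (le_trans (ler_normD _ _)) // lerD2l.
  by rewrite (le_trans (cB s)) // -mulrA mulrCA ler_wpM2l // ltW.
have [p pFz Pp] : exists2 p, `|p| <= 2 * `|F z| & p - F (P p) = p.
  apply: fixed_point_closed_ball => [||s s' sFz s'Fz].
  - by rewrite mulr_ge0.
  - by rewrite /P mul0mx addr0 sub0r normrN; lra.
  have -> : s - F (P s) - (s' - F (P s')) = - (F (P s) - F (P s') - (P s - P s') *m J).
    rewrite PB -mulmxA BJ mulmx1.
    by apply/rowP => j; rewrite !mxE; ring.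
  rewrite normrN (le_trans (SD _ _ (Pnear _ sFz) (Pnear _ s'Fz))) // PB.
  apply: (le_trans (ler_wpM2l _ (cB _))); first by rewrite invr_ge0 mulr_ge0 // ltW.
  by rewrite mulrA invfM divfK ?gt_eqF.
exists (P p); split; last by rewrite PzB (le_trans (cB p)) // -mulrA mulrCA ler_pM2l.
  by rewrite -[F _](subKr p) Pp subrr.
exact: Pnear.
Qed.

Lemma C1_metric_regular k U (F : vec -> 'rV[R]_k) x :
  open U -> U x -> C1_on U F -> row_full ('J F x) ->
  exists2 C, 0 < C & forall del, 0 < del -> exists2 r, 0 < r &
    forall z, `|z - x| + C * `|F z| < r ->
    exists y, [/\ F y = 0, U y, `|y - x| < del & `|y - z| <= C * `|F z|].
Proof.
move=> oU Ux C1F /row_fullP [B BJ]; have [c c0 cB] := mulmx_bounded B.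
have c20 : 0 < (2 * c)^-1 by rewrite invr_gt0 mulr_gt0.
have [r r0 [rU SD]] := C1_on_strict_diff oU Ux C1F c20.
exists (2 * c) => [|del del0]; first by rewrite mulr_gt0.
exists (Num.min r del) => [|z zr]; first by rewrite lt_min r0.
have SD' p q : `|p - x| < Num.min r del -> `|q - x| < Num.min r del ->
    `|F p - F q - (p - q) *m 'J F x| <= (2 * c)^-1 * `|p - q|.
  by rewrite !lt_min => /andP[pr _] /andP[qr _]; exact: SD.
have [y [Fy yx yz]] := graves_zero BJ c0 cB SD' zr.
by exists y; move: yx; rewrite lt_min => /andP[/rU Uy ydel].
Qed.

End Graves.

Section Contingent.
Context {R : realType} {n : nat}.
Local Notation vec := 'rV[R]_n.

(* The contingent (Bouligand tangent) cone of M at x; asking for y in every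
   neighbourhood P of x replaces the usual limit t -> 0. *)
Definition contingent (M : set vec) (x w : vec) : Prop :=
  forall eps, 0 < eps -> forall P : set vec, (\forall y \near x, P y) ->
    exists t y, [/\ 0 < t, M y, P y & `|y - x - t *: w| <= eps * t].

Lemma is_chart_row_full M x k U (F : vec -> 'rV[R]_k) :
  is_chart M x U F -> row_full ('J F x).
Proof.
move=> [_ [Ux [[dF _] [surj _]]]]; rewrite -sub1mx; apply/row_subP => i.
have [v Dv] := surj (row i 1%:M); apply/submxP; exists v.
by rewrite -Dv deriveEjacobian //; exact: dF.
Qed.

Lemma chart_contingent M x k U (F : vec -> 'rV[R]_k) w :
  is_chart M x U F -> M x -> 'D_w F x = 0 -> contingent M x w.
Proof.
move=> chart Mx Dw eps eps0 P /nbhs_normP [rP rP0 near_rP].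
have [oU [Ux [C1F [_ MF]]]] := chart.
have Fx0 : F x = 0 by apply/MF.
have [C C0 reg] := C1_metric_regular oU Ux C1F (is_chart_row_full chart).
have [r r0 zero_near] := reg rP rP0.
pose a := `|w|; pose mu := Num.min 1 eps; pose m := mu / (C * (a + 1)).
have a0 : 0 <= a := normr_ge0 w.
have mu0 : 0 < mu by rewrite lt_min ltr01.
have m0 : 0 < m by rewrite divr_gt0 // mulr_gt0 // ltr_wpDl.
have /nbhs_normP [re re0 approx] := differentiable_approx (C1F.1 x Ux) m0.
pose rr := Num.min r re; pose t := rr / (2 * (a + 1)); pose z := x + t *: w.
have t0 : 0 < t by rewrite divr_gt0 ?lt_min ?r0 // mulr_gt0 // ltr_wpDl.
have tE : t * (2 * (a + 1)) = rr by rewrite divfK // gt_eqF // mulr_gt0 // ltr_wpDl.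
have zx : `|z - x| = t * a by rewrite /z addrAC subrr add0r normrZ gtr0_norm.
have zrr : `|z - x| < rr by rewrite zx -tE ltr_pM2l //; lra.
have Fz : `|F z| <= m * (t * a).
  have zre : `|x - z| < re by rewrite distrC (lt_le_trans zrr) // ge_min lexx orbT.
  have dz : 'd F x (z - x) = 0.
    by rewrite /z addrAC subrr add0r linearZ /= -deriveE ?Dw ?scaler0 //; exact: C1F.1.
  by have := approx z zre; rewrite /= dz Fx0 !subr0 zx.
have CFz : C * `|F z| <= mu * t.
  have -> : mu * t = C * (m * (t * (a + 1))).
    by rewrite /m; field; rewrite !gt_eqF ?ltr_wpDl.
  by rewrite ler_pM2l // (le_trans Fz) // ler_pM2l // ler_pM2l // lerDl.
have mut : mu * t <= t by rewrite ler_piMl ?ge_min ?lexx // ltW.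
have muteps : mu * t <= eps * t by rewrite ler_wpM2r ?ge_min ?lexx ?orbT // ltW.
have zG : `|z - x| + C * `|F z| < r.
  have : rr <= r by rewrite ge_min lexx.
  have : 0 <= t * a by rewrite mulr_ge0 // ltW.
  by rewrite zx; lra.
have [y [Fy Uy yrP yz]] := zero_near z zG.
exists t, y; split => //; first exact/MF.
  by apply: near_rP; rewrite /= distrC.
have -> : y - x - t *: w = y - z by rewrite /z opprD addrA.
by rewrite (le_trans yz) // (le_trans CFz).
Qed.

Lemma normr_sub_ray_le (x y w : vec) t e : 0 < t -> e <= 1 ->
  `|y - x - t *: w| <= e * t -> `|y - x| <= t * (`|w| + 1).
Proof.
move=> t0 e1 yw; have -> : y - x = t *: w + (y - x - t *: w) by rewrite [RHS]addrC subrK.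
rewrite (le_trans (ler_normD _ _)) // normrZ gtr0_norm // mulrDr mulr1 lerD2l.
by rewrite (le_trans yw) // ler_piMl // ltW.
Qed.

Lemma contingent_derive {W : normedModType R} M x w (phi : vec -> W) :
  contingent M x w -> differentiable phi x ->
  forall eps, 0 < eps -> forall P : set vec, (\forall y \near x, P y) ->
  exists t y, [/\ 0 < t, M y, P y, `|y - x - t *: w| <= eps * t &
                  `|phi y - phi x - t *: 'D_w phi x| <= eps * t].
Proof.
move=> Mw dphi eps eps0 P nearP.
have [C C0 dC] := differential_bounded dphi.
pose a := `|w|; pose e := eps / (2 * (a + 1)).
pose m := Num.min 1 (Num.min eps (eps / (2 * C))).
have a0 : 0 <= a := normr_ge0 w.
have e0 : 0 < e by rewrite divr_gt0 // mulr_gt0 // ltr_wpDl.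
have m0 : 0 < m by rewrite !lt_min ltr01 eps0 divr_gt0 // mulr_gt0.
have m1 : m <= 1 by rewrite ge_min lexx.
have meps : m <= eps by rewrite !ge_min lexx orbT.
have mC : C * m <= eps / 2.
  have -> : eps / 2 = C * (eps / (2 * C)) by field; rewrite gt_eqF.
  by rewrite ler_pM2l // !ge_min lexx !orbT.
have nearP' : \forall y \near x,
    P y /\ `|phi y - phi x - 'd phi x (y - x)| <= e * `|y - x|.
  exact: filterS2 nearP (differentiable_approx dphi e0).
have [t [y [t0 My [Py approx] yw]]] := Mw m m0 _ nearP'.
exists t, y; split => //; first exact: le_trans yw (ler_wpM2r (ltW t0) meps).
have yx : `|y - x| <= t * (a + 1) by apply: normr_sub_ray_le yw.
have -> : phi y - phi x - t *: 'D_w phi x =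
    (phi y - phi x - 'd phi x (y - x)) + 'd phi x (y - x - t *: w).
  have -> : 'd phi x (y - x - t *: w) = 'd phi x (y - x) - t *: 'd phi x w.
    by rewrite linearB linearZ.
  by rewrite deriveE // addrA subrK.
rewrite (le_trans (ler_normD _ _)) //.
have h1 : e * `|y - x| <= e * (t * (a + 1)) by rewrite ler_wpM2l // ltW.
have h2 : e * (t * (a + 1)) = eps / 2 * t.
  by rewrite /e; field; rewrite gt_eqF // ltr_wpDl.
have h3 : C * `|y - x - t *: w| <= C * m * t by rewrite -mulrA ler_wpM2l // ltW.
have h4 : C * m * t <= eps / 2 * t by rewrite ler_wpM2r // ltW.
have := dC (y - x - t *: w); lra.
Qed.

Lemma contingent_subgradient_le M x w g (phi : vec -> R) :
  contingent M x w -> differentiable phi x ->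
  (forall e, 0 < e -> \forall y \near x,
     M y -> dotv g (y - x) - e * `|y - x| <= phi y - phi x) ->
  dotv g w <= 'D_w phi x.
Proof.
move=> Mw dphi sub; apply/ler_addgt0Pr => e e0.
pose Kg := \sum_i `|g 0 i|; pose a := `|w|; pose eps := Num.min 1 (e / (Kg + a + 3)).
have Kg0 : 0 <= Kg by rewrite sumr_ge0.
have a0 : 0 <= a := normr_ge0 w.
have K0 : 0 < Kg + a + 3 by rewrite ltr_wpDl // addr_ge0.
have eps0 : 0 < eps by rewrite lt_min ltr01 divr_gt0.
have eps1 : eps <= 1 by rewrite ge_min lexx.
have epsK : eps * (Kg + a + 3) <= e by rewrite -ler_pdivlMr // ge_min lexx orbT.
have [t [y [t0 My suby yw phiy]]] := contingent_derive Mw dphi eps0 (sub eps eps0).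
have {}suby := suby My.
have yx : `|y - x| <= t * (a + 1) by apply: normr_sub_ray_le yw.
have gyx : dotv g (y - x) = t * dotv g w + dotv g (y - x - t *: w).
  by rewrite -dotvZr -dotvDr [_ + (_ - _)]addrC subrK.
have phiy' : phi y - phi x <= t * 'D_w phi x + eps * t.
  have := le_trans (ler_norm _) phiy.
  change (t *: 'D_w phi x) with (t * 'D_w phi x); lra.
have gr : - (Kg * (eps * t)) <= dotv g (y - x - t *: w).
  rewrite lerNl (le_trans (ler_norm _)) // normrN (le_trans (normr_dotv_le _ _)) //.
  by rewrite ler_wpM2l.
have h1 : eps * `|y - x| <= eps * (t * (a + 1)) by rewrite ler_wpM2l // ltW.
have h2 : eps * t * (Kg + a + 3) <= e * t by rewrite mulrAC ler_wpM2r // ltW.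
rewrite -(ler_pM2l t0); have : 0 <= eps * t by rewrite mulr_ge0 // ltW.
lra.
Qed.

Lemma tangent_contingent (M : set vec) (x w : vec) :
  M x -> tangent M x w -> contingent M x w.
Proof. by move=> Mx [k [U [F [chart Dw]]]]; exact: chart_contingent chart Mx Dw. Qed.

Lemma tangentN (M : set vec) (x w : vec) : tangent M x w -> tangent M x (- w).
Proof.
move=> [k [U [F [chart Dw]]]]; exists k, U, F; split; first exact: chart.
have [_ [Ux [[dF _] _]]] := chart.
by rewrite deriveE ?linearN -?deriveE ?Dw ?oppr0 //; exact: dF.
Qed.

Lemma tangentE (M : set vec) x k U (F : vec -> 'rV[R]_k) :
  is_chart M x U F -> M x -> tangent M x = [set v | v *m 'J F x = 0].
Proof.
move=> chart Mx; have [oU [Ux [[dF _] [_ MF]]]] := chart.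
have dFx := dF x Ux.
apply/seteqP; split => v; last by move=> vJ; exists k, U, F; rewrite deriveEjacobian.
move=> /(tangent_contingent Mx) Mv; rewrite /= -deriveEjacobian //.
apply/eqP; rewrite -normr_le0; apply/ler_addgt0Pr => e e0; rewrite add0r.
have [t [y [t0 My Uy _]]] := contingent_derive Mv dFx e0 (open_nbhs_nbhs (conj oU Ux)).
rewrite (MF y Uy).1 // (MF x Ux).1 // subrr sub0r normrN normrZ gtr0_norm //.
by rewrite [e * t]mulrC ler_pM2l.
Qed.

Lemma frechet_subdiff_tangent f (M : set vec) x g (ft : vec -> R) w :
  M x -> frechet_subdiff f x g -> differentiable ft x ->
  (\forall y \near x, M y -> f y = (ft y)%:E) -> tangent M x w ->
  dotv g w = 'D_w ft x.
Proof.
move=> Mx [_ frech] dft agree Tw.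
have fx : f x = (ft x)%:E by exact: (nbhs_singleton agree).
have sub e : 0 < e -> \forall y \near x,
    M y -> dotv g (y - x) - e * `|y - x| <= ft y - ft x.
  move=> e0; have e'0 : 0 < e / (n%:R + 1) by rewrite divr_gt0 // ltr_wpDl.
  apply: filterS2 (frech _ e'0) agree => y fy fty My.
  move: fy; rewrite fty // fx -EFinD lee_fin => fy.
  have en : e / (n%:R + 1) * enorm (y - x) <= e * `|y - x|.
    rewrite (le_trans (ler_wpM2l (ltW e'0) (enorm_le_mx_norm _))) // mulrA ler_wpM2r //.
    by rewrite mulrAC ler_pdivrMr ?ltr_wpDl // ler_pM2l // lerDl.
  lra.
apply/eqP; rewrite eq_le (contingent_subgradient_le (tangent_contingent Mx Tw)) //=.
have := contingent_subgradient_le (tangent_contingent Mx (tangentN Tw)) dft sub.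
by rewrite deriveE // linearN -deriveE // -scaleN1r dotvZr mulN1r lerN2.
Qed.

End Contingent.

Section PartialSmoothness.
Context {R : realType} {n : nat}.
Local Notation vec := 'rV[R]_n.

Lemma near_M_at (M : set vec) x (P : vec -> Prop) : near_M M x P -> M x -> P x.
Proof.
move=> [d [d0 Pd]] Mx; apply: Pd => //.
by rewrite subrr /enorm /dotv big1 ?sqrtr0 // => i _; rewrite mxE mul0r.
Qed.

Lemma Uspace_sharp f (M : set vec) x g :
  par (lim_subdiff f x) = normal M x -> lim_subdiff f x g ->
  (forall w, exists2 p, tangent M x p & orth (tangent M x) (w - p)) ->
  Uspace f x g = tangent M x.
Proof.
move=> sharp gsub proj.
rewrite /Uspace /Vspace orth_lin_span (orth_differences gsub) -orth_lin_span.
by rewrite -/(par (lim_subdiff f x)) sharp /normal orth_orth.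
Qed.

Lemma partly_smooth_riem_grad_eq_gU f (M : set vec) x :
  C1_submanifold M -> partly_smooth f M x ->
  (exists v, riem_grad f M x v) /\ (exists u, gU f x u) /\
  forall v u, riem_grad f M x v -> gU f x u -> v = u.
Proof.
move=> C1M [Mx [reg [[U' [ft [oU' [U'x [C1ft fM]]]]] [sharp _]]]].
have [frechetE [g0 g0sub]] := near_M_at reg Mx.
have [k [U [F chart]]] := C1M x Mx.
have TE := tangentE chart Mx.
have proj w : exists2 p, tangent M x p & orth (tangent M x) (w - p).
  by rewrite TE; have [p] := kermx_orth_proj (is_chart_row_full chart) w; exists p.
have UE g : lim_subdiff f x g -> Uspace f x g = tangent M x.
  by move=> gsub; exact: Uspace_sharp.
have slope g (ft' : vec -> R) w : lim_subdiff f x g -> differentiable ft' x ->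
    (\forall y \near x, M y -> f y = (ft' y)%:E) -> tangent M x w ->
    dotv g w = 'D_w ft' x.
  by move=> /frechetE; exact: frechet_subdiff_tangent.
split; [|split].
- have [p Tp perp] := proj (\row_i 'D_('e_i) ft x).
  exists p; split => //; exists U', ft; do 4!split => //.
  move=> w Tw; rewrite derive_dotv; last exact: C1ft.1.
  by move/eqP: (perp w Tw); rewrite dotvBl subr_eq0 => /eqP.
- by have [p Tp perp] := proj g0; exists p, g0; rewrite UE.
move=> v u [Tv [U2 [ft2 [oU2 [U2x [C1f2 [fM2 vD]]]]]]] [g [gsub]].
rewrite UE // => -[Tu perp].
have near2 : \forall y \near x, M y -> f y = (ft2 y)%:E.
  exact: filterS fM2 (open_nbhs_nbhs (conj oU2 U2x)).
have Tvu : tangent M x (v - u).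
  by move: Tv Tu; rewrite TE /= => vJ uJ; rewrite mulmxBl vJ uJ subrr.
have /eqP : dotv (v - u) (v - u) = 0.
  rewrite dotvBl vD // -(slope g ft2) //; last exact: C1f2.1.
  by move/eqP: (perp _ Tvu); rewrite dotvBl subr_eq0 => /eqP ->; rewrite subrr.
by rewrite dotv_eq0 subr_eq0 => /eqP.
Qed.

End PartialSmoothness.

Theorem proposition5 (R : realType) (n : nat) (f : 'rV[R]_n -> \bar R)
    (M : set 'rV[R]_n) (xbar : 'rV[R]_n) :
  proper_fun f -> closed_fun f ->
  C1_submanifold M -> M xbar ->
  near_M M xbar (partly_smooth f M) ->
  near_M M xbar (fun z => forall vb, frechet_subdiff f z vb -> prox_regular f z vb) ->
  (exists u, gU f xbar u /\ ri (lim_subdiff f xbar) u) ->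
  near_M M xbar (fun x =>
    (exists v, riem_grad f M x v) /\ (exists u, gU f x u) /\
    forall v u, riem_grad f M x v -> gU f x u -> v = u).
Proof.
move=> _ _ C1M _ [delta [delta0 PS]] _ _.
exists delta; split => // x Mx xd.
exact: partly_smooth_riem_grad_eq_gU C1M (PS x Mx xd).
Qed.
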